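(* Let $K_m$ and $L_n$ be regular languages over the same alphabet $\Sigma$ with state complexities $m$ and $n$ respectively. Then the state complexity of $K_m^R\setminus L_n^R$ is at most $(2^m-1)(2^n-1)+1$, and the state complexity of $K_m^R\oplus L_n^R$ is at most $2^{m+n-1}$.
   Context: The state complexity of a regular language is the number of states of its minimal complete DFA. $L^R$ denotes the reversal of $L$; $\setminus$ is set difference and $\oplus$ is symmetric difference. *)

From mathcomp Require Import all_boot.
Set Implicit Arguments. Unset Strict Implicit. Unset Printing Implicit Defensive.

Definition lang (Sigma : finType) := seq Sigma -> bool.

Record dfa (Sigma : finType) (k : nat) := DFA {
  dfa_start : 'I_k;
  dfa_trans : 'I_k -> Sigma -> 'I_k;
  dfa_final : {set 'I_k} }.

Definition dfa_run (Sigma : finType) k (A : dfa Sigma k) (q : 'I_k) (w : seq Sigma) : 'I_k :=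
  foldl (dfa_trans A) q w.

Definition dfa_accepts (Sigma : finType) k (A : dfa Sigma k) (w : seq Sigma) : bool :=
  dfa_run A (dfa_start A) w \in dfa_final A.

Definition recognizes (Sigma : finType) k (A : dfa Sigma k) (L : lang Sigma) : Prop :=
  forall w, dfa_accepts A w = L w.

Definition sc_le (Sigma : finType) (L : lang Sigma) (N : nat) : Prop :=
  exists k (A : dfa Sigma k), k <= N /\ recognizes A L.

Definition sc_eq (Sigma : finType) (L : lang Sigma) (m : nat) : Prop :=
  (exists A : dfa Sigma m, recognizes A L) /\
  (forall k (A : dfa Sigma k), recognizes A L -> m <= k).

Definition lrev (Sigma : finType) (L : lang Sigma) : lang Sigma := fun w => L (rev w).
Definition ldiff (Sigma : finType) (K L : lang Sigma) : lang Sigma := fun w => K w && ~~ L w.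
Definition lsymdiff (Sigma : finType) (K L : lang Sigma) : lang Sigma := fun w => K w (+) L w.

From mathcomp Require Import all_boot.
Set Implicit Arguments. Unset Strict Implicit. Unset Printing Implicit Defensive.

(* The reversal of a language recognised by a DFA A with k
   states is recognised by the deterministic "predecessor-set" automaton on
   {set 'I_k}: start from the final states of A and map a set S on letter a
   to the states sent into S by a.  A word w is accepted iff the start state
   of A lies in the set reached, so rev K has a DFA with 2^k states.
   Running these automata for K and L side by side yields a product
   automaton for any boolean combination of K^R and L^R, and the bounds come
   from merging equivalent product states:
   - for the difference, every pair whose first component is the empty set
     or whose second component is the full set is a dead rejecting state;
     collapsing them leaves (2^m - 1)(2^n - 1) + 1 states;
   - for the symmetric difference, complementing both components flips both
     acceptance bits, so (S, T) and (~S, ~T) are equivalent and one may keep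
     only pairs with the start state of the first DFA outside S, leaving
     2^(m-1) * 2^n states.
   Both collapses are instances of a quotient of an automaton by an
   idempotent map compatible with transitions and acceptance. *)

Section FiniteAutomata.
Variable Sigma : finType.

Definition fa_recognizes (T : finType) (s : T) (d : T -> Sigma -> T)
    (acc : pred T) (L : lang Sigma) : Prop :=
  forall w, acc (foldl d s w) = L w.

(* Enumerating the states turns such an automaton into a DFA on 'I_#|T|. *)
Lemma sc_le_fa (T : finType) (s : T) d acc (L : lang Sigma) N :
  #|T| <= N -> fa_recognizes s d acc L -> sc_le L N.
Proof.
move=> leTN recL.
pose A := DFA (enum_rank s) (fun i a => enum_rank (d (enum_val i) a))
              [set i | acc (enum_val i)].
have runA w x : dfa_run A (enum_rank x) w = enum_rank (foldl d x w).
  by elim: w x => [|a w IH] x //=; rewrite /dfa_run /= enum_rankK -IH.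
exists #|T|, A; split=> // w.
by rewrite /dfa_accepts runA inE enum_rankK recL.
Qed.

Lemma sc_le_fa_quotient (T : finType) (r : T -> T) (s : T) d acc
    (L : lang Sigma) N :
  (forall x, r (r x) = r x) ->
  (forall x a, r (d (r x) a) = r (d x a)) ->
  (forall x, acc (r x) = acc x) ->
  #|[pred x | r x == x]| <= N ->
  fa_recognizes s d acc L -> sc_le L N.
Proof.
move=> rr rd racc leN recL.
have fixr x : r (r x) == r x by rewrite rr.
pose Y := {x : T | r x == x}.
pose dY (y : Y) a : Y := exist _ (r (d (val y) a)) (fixr _).
have run_r w x : r (foldl d (r x) w) = r (foldl d x w).
  by elim: w x => [|a w IH] x /=; rewrite ?rr // -IH rd IH.
have runY w y : val (foldl dY y w) = r (foldl d (val y) w).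
  elim: w y => [|a w IH] y /=; first by case: y => x /= /eqP.
  by rewrite IH /= run_r.
apply: (@sc_le_fa Y (exist _ (r s) (fixr s)) dY (fun y => acc (val y))).
  by rewrite card_sig.
by move=> w; rewrite runY /= run_r racc recL.
Qed.

Section Product.
Variables (T1 T2 : finType) (s1 : T1) (s2 : T2).
Variables (d1 : T1 -> Sigma -> T1) (d2 : T2 -> Sigma -> T2).
Variables (acc1 : pred T1) (acc2 : pred T2) (L1 L2 : lang Sigma).
Hypotheses (recL1 : fa_recognizes s1 d1 acc1 L1)
           (recL2 : fa_recognizes s2 d2 acc2 L2).

Definition prod_trans (x : T1 * T2) (a : Sigma) : T1 * T2 :=
  (d1 x.1 a, d2 x.2 a).

Lemma fa_product (f : bool -> bool -> bool) :
  fa_recognizes (s1, s2) prod_trans (fun x => f (acc1 x.1) (acc2 x.2))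
                (fun w => f (L1 w) (L2 w)).
Proof.
have run w x : foldl prod_trans x w = (foldl d1 x.1 w, foldl d2 x.2 w).
  by elim: w x => [|a w IH] [x1 x2] //=; rewrite IH.
by move=> w; rewrite run /= recL1 recL2.
Qed.

(* Difference bound: a rejecting sink z1 of the first automaton and an
   accepting sink z2 of the second make all pairs meeting them dead. *)
Lemma sc_le_diff_sinks (z1 : T1) (z2 : T2) :
  (forall a, d1 z1 a = z1) -> (forall a, d2 z2 a = z2) ->
  ~~ acc1 z1 -> acc2 z2 ->
  sc_le (fun w => L1 w && ~~ L2 w) ((#|T1| - 1) * (#|T2| - 1) + 1).
Proof.
move=> sink1 sink2 rej1 acc2z.
pose dead (x : T1 * T2) := (x.1 == z1) || (x.2 == z2).
pose r x := if dead x then (z1, z2) else x.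
have r_dead x : dead x -> r x = (z1, z2) by rewrite /r => ->.
have r_live x : ~~ dead x -> r x = x by rewrite /r => /negbTE ->.
have dead_z : dead (z1, z2) by rewrite /dead /= eqxx.
have dead_trans x a : dead x -> dead (prod_trans x a).
  by case: x => x1 x2; rewrite /dead /= => /orP [] /eqP ->;
     rewrite ?sink1 ?sink2 eqxx ?orbT.
apply: (sc_le_fa_quotient (r := r) _ _ _ _ (fa_product (fun b1 b2 => b1 && ~~ b2))).
- move=> x; case: (boolP (dead x)) => [dx | lx]; last by rewrite !(r_live x lx).
  by rewrite (r_dead x dx) r_dead.
- move=> x a; case: (boolP (dead x)) => [dx | lx]; last by rewrite (r_live x lx).
  by rewrite (r_dead x dx) !r_dead ?dead_trans.
- move=> x; case: (boolP (dead x)) => [dx | lx]; last by rewrite (r_live x lx).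
  rewrite r_dead //=; case: x dx => x1 x2; rewrite /dead /= => /orP [] /eqP ->;
  by rewrite (negbTE rej1) ?acc2z ?andbF.
have live_sub : [pred x | r x == x] \subset
    (z1, z2) |: setX [set~ z1] [set~ z2].
  apply/subsetP => -[x1 x2]; rewrite !inE /r /dead /=.
  by case: ifP => [_ /eqP <- | /norP [-> ->] _]; rewrite ?eqxx ?orbT.
rewrite (leq_trans (subset_leq_card live_sub)) // cardsU1 cardsX !cardsC1.
by rewrite addnC leq_add ?subn1 //; case: (_ \notin _).
Qed.

(* Symmetric-difference bound: if involutions c1, c2 commute with the
   transitions and flip acceptance, (x1, x2) and (c1 x1, c2 x2) are
   equivalent, so only pairs with a rejecting first component are needed. *)
Lemma sc_le_xor_complement (c1 : T1 -> T1) (c2 : T2 -> T2) :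
  involutive c1 -> involutive c2 ->
  (forall x a, d1 (c1 x) a = c1 (d1 x a)) ->
  (forall x a, d2 (c2 x) a = c2 (d2 x a)) ->
  (forall x, acc1 (c1 x) = ~~ acc1 x) -> (forall x, acc2 (c2 x) = ~~ acc2 x) ->
  sc_le (fun w => L1 w (+) L2 w) (#|[pred x | ~~ acc1 x]| * #|T2|).
Proof.
move=> c1K c2K d1C d2C acc1C acc2C.
pose r (x : T1 * T2) := if acc1 x.1 then (c1 x.1, c2 x.2) else x.
have r_acc x1 x2 : acc1 x1 -> r (x1, x2) = (c1 x1, c2 x2) by rewrite /r /= => ->.
have r_rej x1 x2 : ~~ acc1 x1 -> r (x1, x2) = (x1, x2).
  by rewrite /r /= => /negbTE ->.
have r_c x1 x2 : r (c1 x1, c2 x2) = r (x1, x2).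
  by rewrite /r /= acc1C; case: (acc1 x1); rewrite /= ?c1K ?c2K.
apply: (sc_le_fa_quotient (r := r) _ _ _ _ (fa_product addb)).
- move=> [x1 x2]; case: (boolP (acc1 x1)) => a1; last by rewrite !r_rej.
  by rewrite r_acc // r_rej // acc1C a1.
- move=> [x1 x2] a; case: (boolP (acc1 x1)) => a1; last by rewrite r_rej.
  by rewrite r_acc // /prod_trans /= d1C d2C r_c.
- move=> [x1 x2]; case: (boolP (acc1 x1)) => a1.
    by rewrite r_acc //= acc1C acc2C a1; case: (acc2 x2).
  by rewrite r_rej //= (negbTE a1).
have fix_sub : [pred x | r x == x] \subset setX [set x | ~~ acc1 x] [set: T2].
  apply/subsetP => -[x1 x2]; rewrite !inE andbT.
  case: (boolP (acc1 x1)) => [a1 | a1 _ //].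
  by rewrite r_acc // => /eqP [] /(congr1 acc1); rewrite acc1C a1.
apply: leq_trans (subset_leq_card fix_sub) _.
rewrite cardsX cardsT leq_mul2r; apply/orP; right.
by apply/subset_leq_card/subsetP => x; rewrite !inE.
Qed.

End Product.

Definition pre k (A : dfa Sigma k) (S : {set 'I_k}) (a : Sigma) : {set 'I_k} :=
  (fun q => dfa_trans A q a) @^-1: S.

Lemma foldl_pre k (A : dfa Sigma k) w S :
  foldl (pre A) S w = [set q | dfa_run A q (rev w) \in S].
Proof.
elim: w S => [|a w IH] S /=; first by apply/setP => q; rewrite inE.
by rewrite IH; apply/setP => q; rewrite !inE rev_cons /dfa_run foldl_rcons.
Qed.

Lemma fa_reversal k (A : dfa Sigma k) (K : lang Sigma) :
  recognizes A K ->
  fa_recognizes (dfa_final A) (pre A) (fun S => dfa_start A \in S) (lrev K).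
Proof. by move=> recK w; rewrite foldl_pre inE /lrev -recK. Qed.

End FiniteAutomata.

Lemma card_sets k : #|{set 'I_k}| = 2 ^ k.
Proof. by rewrite -cardsT -powersetT card_powerset cardsT card_ord. Qed.

Lemma card_sets_avoiding k (q : 'I_k) :
  #|[pred S : {set 'I_k} | q \notin S]| = 2 ^ k.-1.
Proof.
have /eq_card -> : [pred S : {set 'I_k} | q \notin S] =i powerset [set~ q].
  move=> S; rewrite !inE; apply/idP/subsetP => [qS p pS | sub].
    by rewrite !inE; apply: contraNneq qS => <-.
  by apply/negP => /sub; rewrite !inE eqxx.
by rewrite card_powerset cardsC1 card_ord.
Qed.

Theorem proposition2 (Sigma : finType) (K L : lang Sigma) (m n : nat) :
  sc_eq K m -> sc_eq L n ->
  sc_le (ldiff (lrev K) (lrev L)) ((2 ^ m - 1) * (2 ^ n - 1) + 1) /\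
  sc_le (lsymdiff (lrev K) (lrev L)) (2 ^ (m + n - 1)).
Proof.
move=> [[A recK] _] [[B recL] _].
have revK := fa_reversal recK; have revL := fa_reversal recL.
split.
- have := sc_le_diff_sinks revK revL (z1 := set0) (z2 := setT).
  rewrite !card_sets; apply=> [a|a||]; rewrite ?inE //.
  + exact: preimset0.
  + exact: preimsetT.
- have m_gt0 : 0 < m by apply: leq_ltn_trans (ltn_ord (dfa_start A)).
  have := sc_le_xor_complement revK revL (c1 := @setC _) (c2 := @setC _).
  have -> : m + n - 1 = m.-1 + n by rewrite -subn1 addnBAC.
  rewrite expnD -(card_sets_avoiding (dfa_start A)) -card_sets.
  apply=> [||S a|S a|S|S]; rewrite ?inE //; try exact: setCK; exact: preimsetC.
Qed.
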